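(* Let $a, A$ be real numbers with $a+3>0$ and $$\frac{a+3}{2}=\frac{2}{A+3},$$ let $b_1,\dots,b_N$ and $B_1,\dots,B_N$ be real numbers with $$\sqrt{\frac{2}{a+3}}\,(b_n+3)=\sqrt{\frac{2}{A+3}}\,(B_n+3)\qquad (n=1,\dots,N),$$ and let $\eta,\mathcal{E},\lambda_1,\dots,\lambda_N,L$ be real numbers. Consider the general polynomial potentials $$U(r)=\xi r^{a+1}+\sum_{n=1}^N\mu_n r^{b_n+1},\qquad V(\rho)=\eta\rho^{A+1}+\sum_{n=1}^N\lambda_n\rho^{B_n+1},$$ where the parameters of $U$ are related to those of $V$ by the replacements $\xi=-\mathcal{E}$ and $\mu_n=\lambda_n$ ($n=1,\dots,N$). Suppose $\theta$ satisfies the orbit equation for the potential $U$ with energy $E=-\eta$ and angular momentum $L$ on an open interval $I\subset(0,\infty)$. Then, with the coordinate transformation $r=\rho^{(A+3)/2}$, $\theta=\frac{A+3}{2}\phi$, i.e. with $$\phi(\rho)=\frac{2}{A+3}\,\theta\!\left(\rho^{(A+3)/2}\right),$$ the function $\phi$ satisfies the orbit equation for the potential $V$ with energy $\mathcal{E}$ and the same angular momentum $L$ on the interval $J=\{\rho>0:\rho^{(A+3)/2}\in I\}$.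
   Context: For a central potential $W$ on $(0,\infty)$, energy $E$ and angular momentum $L$, a differentiable function $\theta$ on an open interval $I\subset(0,\infty)$ is said to satisfy the (classical) orbit equation if for all $r\in I$ the quantity $E-\frac{L^2}{2r^2}-W(r)$ is positive and $$\frac{d\theta}{dr}=\frac{L/r^{2}}{\sqrt{2\left[E-\frac{L^{2}}{2r^{2}}-W(r)\right]}}.$$ The exponents $a,b_n,A,B_n$ are arbitrary real numbers (general polynomial potentials allow arbitrary real powers). *)

From Stdlib Require Import Reals Lra.
From Coquelicot Require Import Coquelicot.
Open Scope R_scope.

Fixpoint sum1N (f : nat -> R) (N : nat) : R :=
  match N with
  | O => 0
  | S k => sum1N f k + f (S k)
  end.

(* general polynomial potential  W(r) = c r^(e+1) + sum_{n=1}^N m_n r^(d_n+1)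
   (real exponents via Rpower, meaningful for r > 0) *)
Definition genpot (c e : R) (m d : nat -> R) (N : nat) (r : R) : R :=
  c * Rpower r (e + 1) + sum1N (fun n => m n * Rpower r (d n + 1)) N.

Definition open_int (lo : R) (hi : Rbar) (r : R) : Prop :=
  lo < r /\ Rbar_lt r hi.

Definition orbit_eq (W : R -> R) (E L : R) (I : R -> Prop) (theta : R -> R) : Prop :=
  forall r, I r ->
    0 < E - L ^ 2 / (2 * r ^ 2) - W r /\
    derivable_pt_lim theta r
      ((L / r ^ 2) / sqrt (2 * (E - L ^ 2 / (2 * r ^ 2) - W r))).

From Stdlib Require Import Reals Lra Lia.
From Coquelicot Require Import Coquelicot.
Open Scope R_scope.

(* Under [r = rho ^ k] the quantity [r ^ 2 (E - W r)] is all that the orbit equation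
   sees of the potential: the centrifugal term contributes the constant [L ^ 2 / 2] to
   it, and [dtheta/dr] carries the factor [L / r ^ 2]. So if
   [r ^ 2 (E - U r) = rho ^ 2 (calE - V rho)], the chain rule turns the orbit equation
   of [U] into that of [V] for [phi rho = theta (rho ^ k) / k]. For the polynomial
   potentials this identity holds term by term: multiplying [r ^ (e + 1)] by [r ^ 2]
   gives [rho ^ (k (e + 3))], and the hypotheses on the exponents say exactly that
   [k (a + 3) = 2], [2 k = A + 3] and [k (b_n + 3) = B_n + 3], with [k = (A + 3) / 2]. *)

Lemma Rpower_pos (x y : R) : 0 < Rpower x y.
Proof. apply exp_pos. Qed.

Lemma pow2_Rpower (x : R) : 0 < x -> x ^ 2 = Rpower x 2.
Proof. intro Hx. rewrite <- Rpower_pow by exact Hx. reflexivity. Qed.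

Lemma pow2_Rpower_mult (x k : R) : Rpower x k ^ 2 = Rpower x (2 * k).
Proof.
  rewrite pow2_Rpower by apply Rpower_pos.
  rewrite Rpower_mult. f_equal. ring.
Qed.

Lemma pow2_mult_Rpower (r e : R) : 0 < r -> r ^ 2 * Rpower r (e + 1) = Rpower r (e + 3).
Proof.
  intro Hr. rewrite pow2_Rpower, <- Rpower_plus by exact Hr. f_equal. ring.
Qed.

Lemma sum1N_ext (f g : nat -> R) (N : nat) :
  (forall n, (1 <= n <= N)%nat -> f n = g n) -> sum1N f N = sum1N g N.
Proof.
  induction N as [|N IH]; intro Hfg; simpl; [reflexivity|].
  rewrite IH, Hfg; [reflexivity | lia | intros n Hn; apply Hfg; lia].
Qed.

Lemma sum1N_scal (c : R) (f : nat -> R) (N : nat) :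
  c * sum1N f N = sum1N (fun n => c * f n) N.
Proof. induction N as [|N IH]; simpl; [ring|]. rewrite <- IH. ring. Qed.

Lemma genpot_mult_pow2 (c e : R) (m d : nat -> R) (N : nat) (r : R) : 0 < r ->
  r ^ 2 * genpot c e m d N r =
  c * Rpower r (e + 3) + sum1N (fun n => m n * Rpower r (d n + 3)) N.
Proof.
  intro Hr. unfold genpot.
  rewrite Rmult_plus_distr_l, sum1N_scal, <- pow2_mult_Rpower by exact Hr.
  f_equal; [ring|]. apply sum1N_ext. intros n _.
  rewrite <- pow2_mult_Rpower by exact Hr. ring.
Qed.

Lemma genpot_power_substitution (k a A eta calE : R) (b B lam : nat -> R) (N : nat)
    (rho : R) :
  0 < rho -> k * (a + 3) = 2 -> A + 3 = 2 * k ->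
  (forall n, (1 <= n <= N)%nat -> k * (b n + 3) = B n + 3) ->
  Rpower rho k ^ 2 * (- eta - genpot (- calE) a lam b N (Rpower rho k)) =
  rho ^ 2 * (calE - genpot eta A lam B N rho).
Proof.
  intros Hrho Ha HA Hb.
  rewrite !Rmult_minus_distr_l, !genpot_mult_pow2 by (apply Rpower_pos || exact Hrho).
  rewrite pow2_Rpower_mult, !Rpower_mult, Ha, <- HA, <- pow2_Rpower by exact Hrho.
  rewrite (sum1N_ext _ (fun n => lam n * Rpower rho (B n + 3))).
  - ring.
  - intros n Hn. rewrite Rpower_mult, Hb by exact Hn. reflexivity.
Qed.

Lemma effective_energy_rescale (W1 W2 : R -> R) (E1 E2 L r rho : R) :
  0 < r -> 0 < rho -> r ^ 2 * (E1 - W1 r) = rho ^ 2 * (E2 - W2 rho) ->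
  E2 - L ^ 2 / (2 * rho ^ 2) - W2 rho = (r / rho) ^ 2 * (E1 - L ^ 2 / (2 * r ^ 2) - W1 r).
Proof.
  intros Hr Hrho Hpot.
  apply (Rmult_eq_reg_l (rho ^ 2)); [|apply pow_nonzero; lra].
  transitivity (rho ^ 2 * (E2 - W2 rho) - L ^ 2 / 2); [field; lra|].
  rewrite <- Hpot. field. lra.
Qed.

Lemma orbit_eq_power_substitution (W1 W2 : R -> R) (E1 E2 L k : R) (I : R -> Prop)
    (theta : R -> R) :
  k <> 0 ->
  (forall rho, 0 < rho ->
     Rpower rho k ^ 2 * (E1 - W1 (Rpower rho k)) = rho ^ 2 * (E2 - W2 rho)) ->
  orbit_eq W1 E1 L I theta ->
  orbit_eq W2 E2 L (fun rho => 0 < rho /\ I (Rpower rho k))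
    (fun rho => / k * theta (Rpower rho k)).
Proof.
  intros Hk Hpot Horb rho [Hrho HI].
  set (r := Rpower rho k) in *.
  assert (Hr : 0 < r) by apply Rpower_pos.
  assert (Hr_rho : r = rho * Rpower rho (k - 1)).
  { unfold r. rewrite <- (Rpower_1 rho) at 2 by exact Hrho.
    rewrite <- Rpower_plus. f_equal. ring. }
  set (D1 := E1 - L ^ 2 / (2 * r ^ 2) - W1 r).
  set (D2 := E2 - L ^ 2 / (2 * rho ^ 2) - W2 rho).
  assert (HD : D2 = (r / rho) ^ 2 * D1)
    by exact (effective_energy_rescale W1 W2 E1 E2 L r rho Hr Hrho (Hpot rho Hrho)).
  destruct (Horb r HI) as [HD1 Hder]. fold D1 in HD1, Hder.
  split.
  - rewrite HD. apply Rmult_lt_0_compat; [|exact HD1].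
    apply pow_lt, Rdiv_lt_0_compat; assumption.
  - assert (Hsqrt : sqrt (2 * D2) = r / rho * sqrt (2 * D1)).
    { assert (Hq : 0 <= r / rho) by (apply Rlt_le, Rdiv_lt_0_compat; assumption).
      rewrite HD. replace (2 * ((r / rho) ^ 2 * D1)) with (r / rho * (r / rho) * (2 * D1))
        by ring.
      rewrite sqrt_mult_alt, sqrt_square by (assumption || apply Rmult_le_pos; assumption).
      reflexivity. }
    assert (Hs : 0 < sqrt (2 * D1)) by (apply sqrt_lt_R0; lra).
    pose proof (derivable_pt_lim_scal _ (/ k) _ _
      (derivable_pt_lim_comp _ _ _ _ _ (derivable_pt_lim_power rho k Hrho) Hder))
      as Hphi.
    fold r in Hphi.
    replace (L / rho ^ 2 / sqrt (2 * D2))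
      with (/ k * (L / r ^ 2 / sqrt (2 * D1) * (k * Rpower rho (k - 1)))).
    + exact Hphi.
    + assert (Hp : 0 < Rpower rho (k - 1)) by apply Rpower_pos.
      rewrite Hsqrt, Hr_rho. field. repeat split; [lra..|exact Hk].
Qed.

Lemma sqrt_scaled_eq (p q x y : R) :
  0 <= p -> 0 <= q -> p * q = 1 -> sqrt p * x = sqrt q * y -> p * x = y.
Proof.
  intros Hp Hq Hpq Hxy.
  rewrite <- (sqrt_sqrt p Hp), Rmult_assoc, Hxy, <- Rmult_assoc,
    <- sqrt_mult_alt, Hpq, sqrt_1 by exact Hp.
  ring.
Qed.

Theorem mainTheorem1 (a A : R) (N : nat) (b B lam : nat -> R)
  (eta calE L : R) (lo : R) (hi : Rbar) (theta : R -> R) :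
  0 < a + 3 ->
  (a + 3) / 2 = 2 / (A + 3) ->
  (forall n : nat, (1 <= n <= N)%nat ->
     sqrt (2 / (a + 3)) * (b n + 3) = sqrt (2 / (A + 3)) * (B n + 3)) ->
  0 <= lo -> Rbar_lt lo hi ->
  orbit_eq (genpot (- calE) a lam b N) (- eta) L (open_int lo hi) theta ->
  orbit_eq (genpot eta A lam B N) calE L
    (fun rho => 0 < rho /\ open_int lo hi (Rpower rho ((A + 3) / 2)))
    (fun rho => 2 / (A + 3) * theta (Rpower rho ((A + 3) / 2))).
Proof.
  intros Ha Hrel Hb _ _ Horb.
  assert (HA : 0 < A + 3).
  { assert (Hinv : 0 < / (A + 3)).
    { apply (Rmult_lt_reg_l 2); [lra|]. rewrite Rmult_0_r, <- Rdiv_def, <- Hrel. lra. }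
    rewrite <- (Rinv_inv (A + 3)). apply Rinv_0_lt_compat, Hinv. }
  assert (Hk : 2 / (a + 3) = (A + 3) / 2).
  { apply (Rmult_eq_reg_r (2 / (A + 3))); [|apply Rgt_not_eq, Rdiv_lt_0_compat; lra].
    rewrite <- Hrel at 1. field. split; lra. }
  rewrite <- (Rinv_div (A + 3) 2).
  apply (orbit_eq_power_substitution (genpot (- calE) a lam b N) _ (- eta) _ _ _
    (open_int lo hi)); [lra| |exact Horb].
  intros rho Hrho. apply genpot_power_substitution; [exact Hrho|..].
  - rewrite <- Hk. field. lra.
  - field.
  - intros n Hn. rewrite <- Hk.
    apply (sqrt_scaled_eq _ (2 / (A + 3))); [apply Rlt_le, Rdiv_lt_0_compat; lra..| |].
    + rewrite Hk. field. lra.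
    + exact (Hb n Hn).
Qed.
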